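(* Let $M=(X,rk)$ be a matroid on a finite ground set $X$ with rank $r=rk(X)$, and let $j$ be a nonnegative integer. Then $f_1(M)<j+r$ if and only if \[[y^j]T_M(1,y)=\binom{|X|-j-1}{r-1}.\]
   Context: $T_M(x,y)=\sum_{A\subseteq X}(x-1)^{r-rk(A)}(y-1)^{|A|-rk(A)}$ is the Tutte polynomial of $M$, and $[y^j]f(y)$ denotes the coefficient of $y^j$. A flat of $M$ is a set $F\subseteq X$ with $F=\{e\in X: rk(F\cup\{e\})=rk(F)\}$; a hyperplane is a flat of rank $r-1$. $f_1(M)$ is the maximum size of a hyperplane of $M$, i.e. $f_1(M)=\max\{|F|: F\text{ a flat},\ rk(F)=r-1\}$. *)

From mathcomp Require Import all_boot all_order all_algebra.
Set Implicit Arguments. Unset Strict Implicit. Unset Printing Implicit Defensive.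
Import GRing.Theory Num.Theory.
Local Open Scope ring_scope.

Definition is_matroid_rank (X : finType) (rk : {set X} -> nat) : Prop :=
  [/\ forall A : {set X}, (rk A <= #|A|)%N,
      forall A B : {set X}, A \subset B -> (rk A <= rk B)%N
    & forall A B : {set X}, (rk (A :|: B) + rk (A :&: B) <= rk A + rk B)%N].

Definition is_flat (X : finType) (rk : {set X} -> nat) (F : {set X}) : bool :=
  F == [set e | rk (e |: F) == rk F].

Definition f1 (X : finType) (rk : {set X} -> nat) : nat :=
  \max_(F : {set X} | is_flat rk F && (rk F == (rk setT).-1)) #|F|.

(* Tutte polynomial as a polynomial in y whose coefficients are polynomials
   in x (both over int):
   T_M(x,y) = sum_A (x-1)^(r - rk A) (y-1)^(|A| - rk A). *)
Definition tutte (X : finType) (rk : {set X} -> nat) : {poly {poly int}} :=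
  \sum_(A : {set X})
     (('X - 1) ^+ (rk setT - rk A))%:P * ('X - 1) ^+ (#|A| - rk A).

Definition tutte_x1 (X : finType) (rk : {set X} -> nat) : {poly int} :=
  map_poly (fun p : {poly int} => p.[1]) (tutte rk).

(* Binomial coefficient on integers, combinatorial convention:
   binom(n, k) = 0 when n < 0 or k < 0. *)
Definition binz (n k : int) : int :=
  if (n < 0) || (k < 0) then 0 else ('C(`|n|%N, `|k|%N))%:Z.

(* T_M(1,y) is the sum of (y-1)^(|A|-r) over the spanning sets A of M.  Writing
   P_S for the same sum for the restriction M|S, deletion-contraction at e in S
   gives P_S = y P_(S-e) for a loop e, P_S = P'_(S-e) (computed in M/e) when e is
   a coloop of M|S, and P_S = P_(S-e) + P'_(S-e) otherwise.  The numbers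
   C(|S|-j-1, r(S)-1) satisfy the matching Pascal recurrence, so induction on |S|
   shows [y^j] P_S <= C(|S|-j-1, r(S)-1), with equality exactly when every
   non-spanning subset of S has fewer than j + r(S) elements.  For S = X this
   condition says f_1(M) < j + r, because a largest non-spanning set is a
   hyperplane. *)

From mathcomp Require Import all_boot all_order all_algebra.
From mathcomp Require Import zify.
Import GRing.Theory Num.Theory.
Set Implicit Arguments. Unset Strict Implicit. Unset Printing Implicit Defensive.

Lemma exists_subset_card (T : finType) (S : {set T}) k :
  k <= #|S| -> exists2 A : {set T}, A \subset S & #|A| = k.
Proof.
rewrite -bin_gt0 -cards_draws => /card_gt0P [A].
by rewrite inE => /andP [sAS /eqP cA]; exists A.
Qed.

Lemma sum_subsetsD1 (T : finType) (R : nmodType) (F : {set T} -> R) (S : {set T}) e :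
  e \in S ->
  (\sum_(A : {set T} | A \subset S) F A =
   \sum_(A : {set T} | A \subset S :\ e) F A +
   \sum_(A : {set T} | A \subset S :\ e) F (e |: A))%R.
Proof.
move=> eS; rewrite (bigID (fun A : {set T} => e \in A)) /= addrC; congr (_ + _)%R.
  by apply: eq_bigl => A; rewrite subsetD1.
rewrite (reindex_onto (fun A => e |: A) (fun A => A :\ e)) /=; last first.
  by move=> A /andP [_ eA]; rewrite setD1K.
apply: eq_bigl => A; rewrite subsetD1 subUset sub1set eS setU11 andbT /=.
congr (_ && _); case eA: (e \in A) => /=.
- by apply/negbTE/eqP => h; move: eA; rewrite -h !inE eqxx.
- by apply/eqP/setP => x; rewrite !inE; case: eqP => // ->; rewrite eA.
Qed.

(* The rank function of M/e, for e not a loop. *)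
Definition contract (X : finType) (rho : {set X} -> nat) (e : X) : {set X} -> nat :=
  fun A => rho (e |: A) - 1.

Definition nonspanning_lt (X : finType) (rho : {set X} -> nat) (S : {set X}) k :=
  forall A : {set X}, A \subset S -> rho A < rho S -> #|A| < k.

(* [spanning_poly rho S] is T_{M|S}(1, y). *)
Definition spanning_poly (X : finType) (rho : {set X} -> nat) (S : {set X}) : {poly int} :=
  \sum_(A : {set X} | A \subset S)
     (if rho A == rho S then ('X - 1) ^+ (#|A| - rho A) else 0)%R.

Section MatroidRank.

Variables (X : finType) (rho : {set X} -> nat).
Hypothesis hM : is_matroid_rank rho.

Lemma rk_le_card (A : {set X}) : rho A <= #|A|.
Proof. by case: hM. Qed.

Lemma rk_subset (A B : {set X}) : A \subset B -> rho A <= rho B.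
Proof. by case: hM => _ + _; apply. Qed.

Lemma rk_set1 x : rho [set x] <= 1.
Proof. by have := rk_le_card [set x]; rewrite cards1. Qed.

Lemma rkU1 (A : {set X}) x : rho (x |: A) <= rho A + rho [set x].
Proof. by case: hM => _ _ /(_ [set x] A); lia. Qed.

Lemma rkU1_loop (A : {set X}) x : rho [set x] = 0 -> rho (x |: A) = rho A.
Proof. by move=> x0; have := rkU1 A x; have := rk_subset (subsetUr [set x] A); lia. Qed.

Lemma rkU1_ge1 (A : {set X}) x : rho [set x] = 1 -> 1 <= rho (x |: A).
Proof. by move=> <-; apply/rk_subset/subsetUl. Qed.

Lemma contract_matroid e : rho [set e] = 1 -> is_matroid_rank (contract rho e).
Proof.
move=> e1; rewrite /contract; split.
- by move=> A; have := rkU1 A e; have := rk_le_card A; lia.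
- by move=> A B sAB; have := rk_subset (setUS [set e] sAB); lia.
- move=> A B; case: hM => _ _ /(_ (e |: A) (e |: B)).
  rewrite -setUUr -setUIr.
  have := rkU1_ge1 (A :&: B) e1; have := rkU1_ge1 (A :|: B) e1.
  have := rkU1_ge1 A e1; have := rkU1_ge1 B e1.
  lia.
Qed.

Lemma nonspanning_lt_rank (S : {set X}) k : k < rho S -> ~ nonspanning_lt rho S k.
Proof.
move=> kS nsS; have /exists_subset_card [A sAS cA] : k <= #|S|.
  by have := rk_le_card S; lia.
have := nsS A sAS; have := rk_le_card A; rewrite cA; lia.
Qed.

Lemma maximal_nonspanning_hyperplane (B : {set X}) : rho B < rho setT ->
  (forall x, x \notin B -> rho setT <= rho (x |: B)) ->
  is_flat rho B && (rho B == (rho setT).-1).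
Proof.
move=> ltB maxB; apply/andP; split.
  apply/eqP/setP => x; rewrite inE; case xB: (x \in B).
    by rewrite (setUidPr _) ?sub1set ?eqxx.
  by apply/esym/negbTE; have := maxB x (negbT xB); lia.
have [x xB | allB] := pickP (fun x => x \notin B).
  by have := maxB x xB; have := rkU1 B x; have := rk_set1 x; lia.
suff BT : B = setT by rewrite BT ltnn in ltB.
by apply/setP => y; have := allB y; rewrite inE /=; case: (y \in B).
Qed.

Lemma f1_lt_nonspanning k : 0 < rho setT ->
  f1 rho < k.+1 <-> nonspanning_lt rho setT k.+1.
Proof.
move=> r0; rewrite /f1 ltnS; split.
- move/bigmax_leqP => f1k A _ ltA.
  have PA : (A \subset A) && (rho A < rho setT) by rewrite subxx ltA.
  have [B /andP [sAB ltB] maxB] := @arg_maxnP _ A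
    (fun B : {set X} => (A \subset B) && (rho B < rho setT)) (fun B => #|B|) PA.
  have hypB : is_flat rho B && (rho B == (rho setT).-1).
    apply: maximal_nonspanning_hyperplane => // x xB; rewrite leqNgt; apply/negP => ltxB.
    have := maxB (x |: B); rewrite (subset_trans sAB (subsetUr _ _)) ltxB cardsU1 xB.
    by move=> /(_ isT); lia.
  by have := f1k B hypB; have := subset_leq_card sAB; lia.
- move=> ns; apply/bigmax_leqP => F /andP [_ /eqP rF].
  by have := ns F (subsetT F); rewrite rF; lia.
Qed.

Lemma tutte_x1_spanning_poly : tutte_x1 rho = spanning_poly rho setT.
Proof.
have mapX1 m : (('X - 1) ^+ m = map_poly polyC (('X - 1) ^+ m) :> {poly {poly int}})%R.
  by rewrite rmorphXn rmorphB /= map_polyX rmorph1.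
apply/polyP => i; rewrite /tutte_x1 /tutte coef_map_id0 ?horner0 //.
rewrite /spanning_poly !coef_sum horner_sum; apply: eq_big => [A | A _].
  by rewrite subsetT.
rewrite coefCM mapX1 coef_map /= hornerM hornerC horner_exp !hornerE subrr expr0n.
have -> : (rho setT - rho A == 0) = (rho A == rho setT).
  by apply/eqP/eqP; have := rk_subset (subsetT A); lia.
by case: eqP => _; rewrite ?mul1r ?mul0r ?coef0.
Qed.

Section DeletionContraction.

Variables (S : {set X}) (e : X).
Hypothesis eS : e \in S.

Lemma setU1_subset (A : {set X}) : A \subset S :\ e -> e |: A \subset S.
Proof. by rewrite subsetD1 subUset sub1set eS => /andP [-> _]. Qed.

Lemma rk_setD1_loop : rho [set e] = 0 -> rho (S :\ e) = rho S.
Proof. by move=> e0; rewrite -{2}(setD1K eS) rkU1_loop. Qed.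

Lemma spanning_poly_loop :
  rho [set e] = 0 -> spanning_poly rho S = (spanning_poly rho (S :\ e) * 'X)%R.
Proof.
move=> e0; rewrite {1}/spanning_poly (sum_subsetsD1 _ eS) -rk_setD1_loop //.
rewrite -/(spanning_poly rho (S :\ e)); set P := spanning_poly rho (S :\ e).
rewrite -[X in (P + X)%R](_ : (P * ('X - 1))%R = _).
  by rewrite -{1}[P]mulr1 -mulrDr addrC subrK.
rewrite mulr_suml; apply: eq_bigr => A; rewrite subsetD1 => /andP [_ eA].
rewrite cardsU1 eA rkU1_loop //; case: eqP => _; last by rewrite mul0r.
by rewrite -exprSr add1n subSn ?rk_le_card.
Qed.

Lemma rk_contract_setD1 : contract rho e (S :\ e) = (rho S).-1.
Proof. by rewrite /contract setD1K // subn1. Qed.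

Lemma sum_subsetsD1_contract : rho [set e] = 1 ->
  (\sum_(A : {set X} | A \subset S :\ e)
     (if rho (e |: A) == rho S then ('X - 1) ^+ (#|e |: A| - rho (e |: A)) else 0))%R
  = spanning_poly (contract rho e) (S :\ e).
Proof.
move=> e1; apply: eq_bigr => A; rewrite subsetD1 => /andP [_ eA].
rewrite rk_contract_setD1 /contract cardsU1 eA.
have := rkU1_ge1 A e1; have := rkU1_ge1 (S :\ e) e1; rewrite setD1K // => S1 A1.
have -> : (rho (e |: A) == rho S) = (rho (e |: A) - 1 == (rho S).-1).
  by apply/eqP/eqP; lia.
by case: eqP => // _; congr (_ ^+ _)%R; lia.
Qed.

Lemma spanning_poly_coloop : rho [set e] = 1 -> rho (S :\ e) < rho S ->
  spanning_poly rho S = spanning_poly (contract rho e) (S :\ e).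
Proof.
move=> e1 ltS; rewrite {1}/spanning_poly (sum_subsetsD1 _ eS) sum_subsetsD1_contract //.
rewrite big1 ?add0r // => A /rk_subset; case: eqP => // ->; lia.
Qed.

Lemma spanning_poly_del_con : rho [set e] = 1 -> rho (S :\ e) = rho S ->
  spanning_poly rho S =
  (spanning_poly rho (S :\ e) + spanning_poly (contract rho e) (S :\ e))%R.
Proof.
move=> e1 eqS; rewrite {1}/spanning_poly (sum_subsetsD1 _ eS) sum_subsetsD1_contract //.
by rewrite -eqS.
Qed.

Lemma nonspanning_lt_loop k : rho [set e] = 0 ->
  nonspanning_lt rho S k.+1 <-> nonspanning_lt rho (S :\ e) k.
Proof.
move=> e0; rewrite /nonspanning_lt rk_setD1_loop //; split=> ns A sA ltA.
- have := ns _ (setU1_subset sA); rewrite rkU1_loop // cardsU1 => /(_ ltA).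
  by move: sA; rewrite subsetD1 => /andP [_ ->].
- have := ns _ (setSD [set e] sA).
  have := rk_subset (subD1set A e); have := cardsD1 e A; lia.
Qed.

Lemma nonspanning_lt_contract k : rho [set e] = 1 ->
  nonspanning_lt rho S k.+1 -> nonspanning_lt (contract rho e) (S :\ e) k.
Proof.
move=> e1 ns A sA; rewrite rk_contract_setD1 /contract => ltA.
have := ns _ (setU1_subset sA); rewrite cardsU1.
by move: sA; rewrite subsetD1 => /andP [_ ->]; lia.
Qed.

Lemma nonspanning_lt_mem k (A : {set X}) : rho [set e] = 1 ->
  nonspanning_lt (contract rho e) (S :\ e) k ->
  A \subset S -> rho A < rho S -> e \in A -> #|A| < k.+1.
Proof.
move=> e1 ns sA ltA eA; have := ns _ (setSD [set e] sA).
rewrite rk_contract_setD1 /contract setD1K //.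
have e1A : [set e] \subset A by rewrite sub1set.
have := rk_subset e1A; rewrite e1.
by have := cardsD1 e A; rewrite eA; lia.
Qed.

Lemma nonspanning_lt_coloop k : rho [set e] = 1 -> rho (S :\ e) < rho S ->
  nonspanning_lt rho S k.+1 <->
  nonspanning_lt (contract rho e) (S :\ e) k /\ #|S :\ e| < k.+1.
Proof.
move=> e1 ltS; split.
- by move=> ns; split; [exact: nonspanning_lt_contract | exact: ns (subD1set S e) ltS].
- move=> [ns ltSe] A sA ltA; case eA: (e \in A); first exact: nonspanning_lt_mem ns sA ltA eA.
  have : A \subset S :\ e by rewrite subsetD1 sA eA.
  by move/subset_leq_card; lia.
Qed.

Lemma nonspanning_lt_del_con k : rho [set e] = 1 -> rho (S :\ e) = rho S ->
  nonspanning_lt rho S k.+1 <->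
  nonspanning_lt rho (S :\ e) k.+1 /\ nonspanning_lt (contract rho e) (S :\ e) k.
Proof.
move=> e1 eqS; split.
- move=> ns; split; last exact: nonspanning_lt_contract.
  by move=> A sA; rewrite eqS; apply/ns/(subset_trans sA)/subD1set.
- move=> [nsD nsC] A sA ltA; case eA: (e \in A); first exact: nonspanning_lt_mem nsC sA ltA eA.
  by apply: nsD; rewrite ?subsetD1 ?sA ?eA ?eqS.
Qed.

End DeletionContraction.

End MatroidRank.

(* [bin_bound n r j] is C(n - j - 1, r - 1) in the convention of [binz] when
   0 < r, and [j == n], the coefficient of y^j in y^n, when r = 0. *)
Definition bin_bound (n r j : nat) : nat :=
  if r is s.+1 then (if j < n then 'C(n - j.+1, s) else 0) else (j == n : nat).

Lemma bin_boundS n r j :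
  bin_bound n.+1 r.+1 j = bin_bound n r.+1 j + bin_bound n r j.
Proof.
rewrite /bin_bound; case: r => [|r].
  by rewrite !bin0 ltnS leq_eqVlt; case: ltngtP.
case: (ltngtP j n) => [ltjn|ltnj|->].
- by rewrite ltnW // subSn // binS addnC.
- by rewrite ltnS leqNgt ltnj.
- by rewrite ltnSn subnn bin0n.
Qed.

Lemma bin_bound_shift n r j : bin_bound n.+1 r j.+1 = bin_bound n r j.
Proof. by case: r. Qed.

Lemma bin_bound_eq0 n r j : bin_bound n r.+1 j = 0 <-> n < j + r.+1.
Proof.
rewrite /bin_bound; case: ltnP => ltjn; last by split=> // _; lia.
by have := bin_gt0 (n - j.+1) r; case: 'C(_, _) => [|c] /=; lia.
Qed.

Definition coef_bound_sharp (X : finType) (rho : {set X} -> nat) (S : {set X}) :=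
  forall j : nat,
    ((spanning_poly rho S)`_j <= (bin_bound #|S| (rho S) j)%:Z :> int)%R /\
    (((spanning_poly rho S)`_j = (bin_bound #|S| (rho S) j)%:Z)%R <->
     nonspanning_lt rho S (j + rho S)).

Section CoefBound.

Variables (X : finType) (rho : {set X} -> nat).
Hypothesis hM : is_matroid_rank rho.

Lemma coef_bound_sharp_set0 : coef_bound_sharp rho set0.
Proof.
move=> j; have r0 : rho set0 = 0 by have := rk_le_card hM set0; rewrite cards0; lia.
have -> : spanning_poly rho set0 = 1%R.
  rewrite /spanning_poly (big_pred1 set0) => [|A]; last by rewrite subset0.
  by rewrite eqxx cards0 r0 expr0.
rewrite coef1 cards0 r0 /bin_bound.
have -> : ((j == 0)%:R = Posz (j == 0))%R by case: (j == 0).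
by split=> //; split=> // _ A _; rewrite r0.
Qed.

Variables (S : {set X}) (e : X).
Hypothesis eS : e \in S.

Lemma card_setD1S : #|S| = #|S :\ e|.+1.
Proof. by rewrite (cardsD1 e S) eS. Qed.

Lemma coef_bound_sharp_loop : rho [set e] = 0 ->
  coef_bound_sharp rho (S :\ e) -> coef_bound_sharp rho S.
Proof.
move=> e0 IH j; have rSe := rk_setD1_loop hM eS e0.
rewrite (spanning_poly_loop hM eS e0) coefMX card_setD1S -rSe.
case: j => [|j] /=; last first.
  by rewrite bin_bound_shift addSn (nonspanning_lt_loop hM eS _ e0).
(* [y^0] (P y) = 0, and both sides of the equivalence fail unless r(S) = 0. *)
rewrite add0n; split=> //.
case rS: (rho (S :\ e)) => [|r]; first by split=> // _ A _; rewrite -rSe rS.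
rewrite (nonspanning_lt_loop hM eS _ e0).
split=> [h | /nonspanning_lt_rank]; last by rewrite rS => /(_ hM (ltnSn r)).
move/eqP: h; rewrite eq_sym eqz_nat => /eqP/(bin_bound_eq0 _ _ _).1.
by have := rk_le_card hM (S :\ e); lia.
Qed.

Lemma coef_bound_sharp_coloop : rho [set e] = 1 -> rho (S :\ e) < rho S ->
  coef_bound_sharp (contract rho e) (S :\ e) -> coef_bound_sharp rho S.
Proof.
move=> e1 ltS IH j; have [cle ceq] := IH j.
rewrite (spanning_poly_coloop hM eS e1 ltS) card_setD1S.
case rS: (rho S) => [|r]; first by rewrite rS in ltS.
rewrite (rk_contract_setD1 rho eS) rS /= in cle ceq.
rewrite bin_boundS PoszD addnS (nonspanning_lt_coloop hM eS _ e1 ltS) -addnS.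
rewrite -ceq -bin_bound_eq0; have := le0z_nat (bin_bound #|S :\ e| r.+1 j).
set c := ((spanning_poly _ _)`_j)%R in cle ceq *.
by split; [|split=> [|[]]]; lia.
Qed.

Lemma coef_bound_sharp_del_con : rho [set e] = 1 -> rho (S :\ e) = rho S ->
  coef_bound_sharp rho (S :\ e) -> coef_bound_sharp (contract rho e) (S :\ e) ->
  coef_bound_sharp rho S.
Proof.
move=> e1 eqS IHdel IHcon j; have [cle_del ceq_del] := IHdel j.
have [cle_con ceq_con] := IHcon j.
rewrite (spanning_poly_del_con hM eS e1 eqS) coefD card_setD1S.
case rS: (rho S) => [|r]; first by have := rkU1_ge1 hM (S :\ e) e1; rewrite setD1K // rS.
rewrite eqS rS in cle_del ceq_del; rewrite (rk_contract_setD1 rho eS) rS /= in cle_con ceq_con.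
rewrite bin_boundS PoszD addnS (nonspanning_lt_del_con hM eS _ e1 eqS) -addnS.
rewrite -ceq_del -ceq_con.
set c_del := ((spanning_poly rho _)`_j)%R in cle_del ceq_del *.
set c_con := ((spanning_poly (contract _ _) _)`_j)%R in cle_con ceq_con *.
by split; [|split=> [|[]]]; lia.
Qed.

End CoefBound.

Lemma coef_bound_sharpP (X : finType) (rho : {set X} -> nat) (S : {set X}) :
  is_matroid_rank rho -> coef_bound_sharp rho S.
Proof.
move: {2}#|S| (erefl #|S|) => n; elim: n rho S => [|n IH] rho S cS hM.
  have -> : S = set0 by apply/eqP; rewrite -cards_eq0 -cS.
  exact: coef_bound_sharp_set0.
have [e eS] : exists e, e \in S by apply/card_gt0P; rewrite cS.
have cSe : #|S :\ e| = n by move: cS; rewrite (card_setD1S eS) => -[].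
case e01: (rho [set e]) (rk_set1 hM e) => [|[|//]] _.
  exact: coef_bound_sharp_loop e01 (IH _ _ cSe hM).
have IHcon := IH _ _ cSe (contract_matroid hM e01).
case: (ltnP (rho (S :\ e)) (rho S)) => [ltS | geS].
  exact: coef_bound_sharp_coloop e01 ltS IHcon.
have eqS : rho (S :\ e) = rho S by apply/eqP; rewrite eqn_leq geS rk_subset ?subD1set.
exact: coef_bound_sharp_del_con e01 eqS (IH _ _ cSe hM) IHcon.
Qed.

Local Open Scope ring_scope.

Lemma binz_bin_bound (n r j : nat) :
  binz (n%:Z - j%:Z - 1) (r.+1%:Z - 1) = (bin_bound n r.+1 j)%:Z.
Proof.
rewrite /binz /bin_bound; have -> : (r.+1%:Z - 1 < 0) = false by lia.
case: ltnP => ltjn; last by have -> : (n%:Z - j%:Z - 1 < 0) = true by lia.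
have -> : (n%:Z - j%:Z - 1 < 0) = false by lia.
by congr (Posz 'C(_, _)); lia.
Qed.

Theorem theorem3p3 (X : finType) (rk : {set X} -> nat)
  (hM : is_matroid_rank rk) (hr : (0 < rk setT)%N) (j : nat) :
  (f1 rk < j + rk setT)%N <->
  (tutte_x1 rk)`_j
    = binz (#|X|%:Z - j%:Z - 1) ((rk setT)%:Z - 1).
Proof.
have [_ sharp] := coef_bound_sharpP setT hM j.
move: sharp; rewrite tutte_x1_spanning_poly // cardsT.
case rS: (rk setT) => [|r]; first by rewrite rS in hr.
by rewrite binz_bin_bound addnS f1_lt_nonspanning // -rS => <-.
Qed.
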